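(* Let $K=3$ and let $l\ge m\ge s\ge 0$ be integers with $m\ge s+2$. Then \[ h(l,\,m,\,s)\ \le\ h(l-1,\,m-1,\,s+2). \]
   Context: For a vector $\vec n=(n_1,n_2,n_3)$ of nonnegative integers, the following random process is run: stocks start at $\vec n^{(0)}=\vec n$; at each step $t=1,2,\dots$, as long as at least two coordinates of $\vec n^{(t-1)}$ are nonzero, an index $i$ is chosen uniformly at random (independently of the past) among the indices with $n_i^{(t-1)}>0$, and $\vec n^{(t)}=\vec n^{(t-1)}-\vec e_i$ ($\vec e_i$ the $i$-th standard unit vector). The process stops at the first time $T$ at which at most one coordinate is nonzero, and $h(\vec n)=\mathbb{E}[T]$. Equivalently, with $\operatorname{support}(\vec n)=\{i:n_i\ne 0\}$: $h(\vec n)=0$ if $|\operatorname{support}(\vec n)|\le1$, and otherwise $h(\vec n)=1+\frac{1}{|\operatorname{support}(\vec n)|}\sum_{i\in\operatorname{support}(\vec n)}h(\vec n-\vec e_i)$. *)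

From mathcomp Require Import all_boot all_order all_algebra.
Set Implicit Arguments. Unset Strict Implicit. Unset Printing Implicit Defensive.
Import Order.TTheory GRing.Theory Num.Theory.
Local Open Scope ring_scope.

Definition supp3 (a b c : nat) : nat := ((a != 0%N) + (b != 0%N) + (c != 0%N))%N.

(* Each recursive call lowers a+b+c by one, so fuel a+b+c suffices. *)
Fixpoint hfuel (k : nat) (a b c : nat) : rat :=
  match k with
  | 0%N => 0
  | k'.+1 =>
    if (supp3 a b c <= 1)%N then 0
    else 1 + ((if a != 0%N then hfuel k' a.-1 b c else 0)
            + (if b != 0%N then hfuel k' a b.-1 c else 0)
            + (if c != 0%N then hfuel k' a b c.-1 else 0)) / (supp3 a b c)%:R
  end.

(* h(n1,n2,n3) = expected stopping time of the random depletion process (K = 3). *)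
Definition h (a b c : nat) : rat := hfuel (a + b + c) a b c.

From mathcomp Require Import all_boot all_order all_algebra.
From mathcomp Require Import zify.
From mathcomp.algebra_tactics Require Import lra.
Import Order.TTheory GRing.Theory Num.Theory.
Local Open Scope ring_scope.

(* For stocks x >= y >= z, three balancing moves never decrease h: one unit
   from the top stock to the middle one, one unit from the top to the bottom
   one when y = z + 1, and one unit from each of the two top stocks to the
   bottom one (the theorem).  They are proved together by induction on the
   total stock: unfold both sides once and compare the recursion terms
   pairwise, each comparison being an instance of one of the three moves on a
   smaller configuration, or an equality by symmetry of h when the order of the
   stocks breaks.  The supports differ only when z = 0 in the third move; there
   the two-stock bounds h(x+1, y+1, 0) <= h(x, y, 0) + 2 and
   h(x, y, 0) + 1 <= h(x, y, 1) close the gap. *)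

Lemma hfuel_enough k k' a b c : (a + b + c <= k)%N -> (a + b + c <= k')%N ->
  hfuel k a b c = hfuel k' a b c.
Proof.
elim: k k' a b c => [|k IHk] [|k'] a b c //= hk hk';
  try by have [-> [-> ->]] : a = 0%N /\ b = 0%N /\ c = 0%N by lia.
case: ifP => // _; congr (1 + (_ + _ + _) / _).
- by case: eqP => // /eqP a0; apply: IHk; lia.
- by case: eqP => // /eqP b0; apply: IHk; lia.
- by case: eqP => // /eqP c0; apply: IHk; lia.
Qed.

Lemma hE a b c : h a b c =
  if (supp3 a b c <= 1)%N then 0
  else 1 + ((if a != 0%N then h a.-1 b c else 0)
          + (if b != 0%N then h a b.-1 c else 0)
          + (if c != 0%N then h a b c.-1 else 0)) / (supp3 a b c)%:R.
Proof.
rewrite /h; case E: (a + b + c)%N => [|k].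
  by have [-> [-> ->]] : a = 0%N /\ b = 0%N /\ c = 0%N by lia.
rewrite /=; case: ifP => // _; congr (1 + (_ + _ + _) / _).
- by case: eqP => // /eqP a0; apply: hfuel_enough; lia.
- by case: eqP => // /eqP b0; apply: hfuel_enough; lia.
- by case: eqP => // /eqP c0; apply: hfuel_enough; lia.
Qed.

Lemma h_ge0 a b c : 0 <= h a b c.
Proof.
rewrite /h; move: (a + b + c)%N => k.
elim: k a b c => [|k IHk] a b c //=.
case: ifP => // _; rewrite addr_ge0 // divr_ge0 //.
by rewrite !addr_ge0 //; case: ifP.
Qed.

Lemma hC12 a b c : h a b c = h b a c.
Proof.
have hfuelC k x y z : hfuel k x y z = hfuel k y x z.
  elim: k x y z => [|k IHk] x y z //=.
  have -> : supp3 y x z = supp3 x y z by rewrite /supp3; lia.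
  case: ifP => // _; rewrite (IHk x.-1) (IHk x y.-1) (IHk x y z.-1).
  by congr (1 + _ / _); case: (x != 0%N); case: (y != 0%N); lra.
by rewrite /h hfuelC (addnC a).
Qed.

Lemma hC23 a b c : h a b c = h a c b.
Proof.
have hfuelC k x y z : hfuel k x y z = hfuel k x z y.
  elim: k x y z => [|k IHk] x y z //=.
  have -> : supp3 x z y = supp3 x y z by rewrite /supp3; lia.
  case: ifP => // _; rewrite (IHk x.-1) (IHk x y.-1) (IHk x y z.-1).
  by congr (1 + _ / _); case: (y != 0%N); case: (z != 0%N); lra.
by rewrite /h hfuelC -addnA (addnC b) addnA.
Qed.

Lemma hx00 a : h a 0 0 = 0.
Proof. by rewrite hE /supp3; case: a. Qed.

Lemma h0x0 b : h 0 b 0 = 0.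
Proof. by rewrite hC12 hx00. Qed.

Lemma hSS0 a b : h a.+1 b.+1 0 = 1 + (h a b.+1 0 + h a.+1 b 0) / 2.
Proof. by rewrite hE /= addr0. Qed.

Lemma hSSS a b c :
  h a.+1 b.+1 c.+1 = 1 + (h a b.+1 c.+1 + h a.+1 b c.+1 + h a.+1 b.+1 c) / 3.
Proof. by rewrite hE. Qed.

Lemma hSS0_ge1 a b : 1 <= h a.+1 b.+1 0.
Proof. by rewrite hSS0; have := h_ge0 a b.+1 0; have := h_ge0 a.+1 b 0; lra. Qed.

Lemma hx10_le2 a : h a 1 0 <= 2.
Proof. by elim: a => [|a IHa]; rewrite ?h0x0 // hSS0 hx00; lra. Qed.

Lemma hSS0_le_add2 a b : h a.+1 b.+1 0 <= h a b 0 + 2.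
Proof.
elim: a b => [|a IHa] b; first by rewrite h0x0 hC12 hx10_le2.
elim: b => [|b IHb]; first by rewrite hx00 hx10_le2.
by rewrite hSS0 (hSS0 a b); have := IHa b.+1; lra.
Qed.

Lemma hxy0_add1_le a b : (0 < a + b)%N -> h a b 0 + 1 <= h a b 1.
Proof.
elim: a b => [|a IHa] b hab.
  by case: b hab => // b _; rewrite h0x0 hC12 hC23 add0r hSS0_ge1.
elim: b {hab} => [|b IHb]; first by rewrite hx00 hC23 add0r hSS0_ge1.
rewrite hSSS hSS0.
by have := IHa b.+1 ltac:(lia); lra.
Qed.

Definition top_to_mid_below n := forall x y z,
  (x.+2 + y + z < n)%N -> (z <= y <= x)%N -> h x.+2 y z <= h x.+1 y.+1 z.

Definition top_to_low_below n := forall x y,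
  (x.+2 + y.+1 + y < n)%N -> (y <= x)%N -> h x.+2 y.+1 y <= h x.+1 y.+1 y.+1.

Definition top_mid_to_low_below n := forall x y z,
  (x.+2 + y.+2 + z < n)%N -> (z <= y <= x)%N -> h x.+2 y.+2 z <= h x.+1 y.+1 z.+2.

Section BalancingStep.

Variable n : nat.
Hypothesis IHmid : top_to_mid_below n.
Hypothesis IHlow : top_to_low_below n.
Hypothesis IHtwo : top_mid_to_low_below n.

Lemma top_to_mid_step : top_to_mid_below n.+1.
Proof.
move=> x [|y] z; rewrite ltnS => hn /andP[hzy hyx].
  by move: hzy; rewrite leqn0 => /eqP->; rewrite hx00 h_ge0.
have mid : h x.+1 y.+1 z <= h x y.+2 z.
  case: (ltnP y.+1 x) => [|hxy]; first by case: x hn hyx => // x *; apply: IHmid; lia.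
  have -> : x = y.+1 by lia.
  by rewrite (hC12 y.+2).
case: z hzy hn mid => [|z] hzy hn mid.
  have : h x.+2 y 0 <= h x.+1 y.+1 0 by apply: IHmid; lia.
  by rewrite (hSS0 x.+1 y) (hSS0 x y.+1); lra.
have low : h x.+2 y z.+1 <= h x.+1 y.+1 z.+1.
  case: (ltnP z y) => [|hyz]; first by move=> *; apply: IHmid; lia.
  have -> : z = y by lia.
  by rewrite (hC23 x.+2); apply: IHlow; lia.
have : h x.+2 y.+1 z <= h x.+1 y.+2 z by apply: IHmid; lia.
by rewrite (hSSS x.+1 y z) (hSSS x y.+1 z); lra.
Qed.

Lemma top_to_low_step : top_to_low_below n.+1.
Proof.
move=> x [|y]; rewrite ltnS => hn hyx.
  rewrite (hSS0 x.+1 0) hx00 (hSSS x 0 0) (hC23 x.+1 0 1).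
  by have := h_ge0 x 1 1; have := h_ge0 x.+1 1 0; lra.
have top : h x.+1 y.+2 y.+1 <= h x y.+2 y.+2.
  case: (ltnP y.+1 x) => [|hxy]; first by case: x hn hyx => // x *; apply: IHlow; lia.
  have -> : x = y.+1 by lia.
  by rewrite (hC23 y.+2) (hC12 y.+2).
have mid : h x.+2 y.+1 y.+1 <= h x.+1 y.+2 y.+1 by apply: IHmid; lia.
have two : h x.+2 y.+2 y <= h x.+1 y.+1 y.+2 by apply: IHtwo; lia.
have := hC23 x.+1 y.+1 y.+2.
by rewrite (hSSS x.+1 y.+1 y) (hSSS x y.+1 y.+1); lra.
Qed.

Lemma top_mid_to_low_step : top_mid_to_low_below n.+1.
Proof.
move=> x y z; rewrite ltnS => hn /andP[hzy hyx].
have top : h x.+1 y.+2 z <= h x y.+1 z.+2.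
  case: (ltnP y x) => [|hxy]; first by case: x hn hyx => // x *; apply: IHtwo; lia.
  have -> : x = y by lia.
  rewrite (hC12 y.+1) (hC12 y).
  case: (ltnP z y) => [|hyz]; first by case: y hn hzy hyx hxy => // y *; apply: IHtwo; lia.
  have -> : z = y by lia.
  by rewrite (hC12 y.+2) (hC23 y.+1).
have mid : h x.+2 y.+1 z <= h x.+1 y z.+2.
  case: (ltnP z y) => [|hyz]; first by case: y hn hzy hyx top => // y *; apply: IHtwo; lia.
  have -> : z = y by lia.
  rewrite (hC23 x.+1 y).
  case: (ltnP y x) => [|hxy]; first by move=> *; apply: IHmid; lia.
  have -> : x = y by lia.
  by rewrite (hC12 y.+2).
rewrite (hSSS x y z.+1).
case: z hzy hn top mid => [|z] hzy hn top mid.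
  have := hSS0 x.+1 y.+1; have := hSS0_le_add2 x.+1 y.+1.
  by have := hxy0_add1_le x.+1 y.+1 ltac:(lia); lra.
have : h x.+2 y.+2 z <= h x.+1 y.+1 z.+2 by apply: IHtwo; lia.
by rewrite (hSSS x.+1 y.+1 z); lra.
Qed.

End BalancingStep.

Lemma balancing n :
  [/\ top_to_mid_below n, top_to_low_below n & top_mid_to_low_below n].
Proof.
elim: n => [|n [IHmid IHlow IHtwo]]; first by split=> x y *; lia.
split; [exact: top_to_mid_step | exact: top_to_low_step | exact: top_mid_to_low_step].
Qed.

Theorem lemma5 (l m s : nat) (hlm : (m <= l)%N) (hms : (s <= m)%N)
  (hms2 : (s + 2 <= m)%N) :
  h l m s <= h l.-1 m.-1 s.+2.
Proof.
have [y Em] : exists y, m = y.+2 by exists m.-2; lia.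
have [x El] : exists x, l = x.+2 by exists l.-2; lia.
subst l m.
have [_ _ top_mid_to_low] := balancing (x.+2 + y.+2 + s).+1.
by apply: top_mid_to_low; lia.
Qed.
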